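(* Let $\Gamma\subseteq\mathrm{Aff}(\mathbb{R}^n)$ be an $n$-dimensional crystallographic group whose subgroup of pure translations is exactly $\mathbb{Z}^n$. Then there exists a finite set $\Delta^{base}\subseteq\mathbb{R}^n$, with $\xi_{(d,I_n)}\in\mathrm{Aut}(\Gamma)$ for every $d\in\Delta^{base}$, such that the following holds: whenever $\varphi,\psi\in\mathrm{Aut}(\Gamma)$ satisfy $\varphi|_{\mathbb{Z}^n}=\psi|_{\mathbb{Z}^n}$, there exist $d^{base}\in\Delta^{base}$ and an inner automorphism $\iota$ of $\Gamma$ such that $\psi=\iota\circ\xi_{(d^{base},I_n)}\circ\varphi$.
   Context: $\mathrm{Aff}(\mathbb{R}^n)=\mathbb{R}^n\rtimes\mathrm{GL}_n(\mathbb{R})$ with multiplication $(d_1,D_1)(d_2,D_2)=(d_1+D_1d_2,D_1D_2)$. An $n$-dimensional crystallographic group is a discrete cocompact subgroup of $\mathbb{R}^n\rtimes O(n)$; here it is realised inside $\mathrm{Aff}(\mathbb{R}^n)$ such that $\Gamma\cap\mathbb{R}^n=\{(z,I_n)\mid z\in\mathbb{Z}^n\}$, identified with $\mathbb{Z}^n$; all other elements then have linear part in $\mathrm{GL}_n(\mathbb{Z})$. For $(d,D)\in\mathrm{Aff}(\mathbb{R}^n)$, $\xi_{(d,D)}$ denotes the map $\gamma\mapsto(d,D)\gamma(d,D)^{-1}$. Every automorphism of $\Gamma$ is of the form $\xi_{(d,D)}$ for some $(d,D)\in\mathrm{Aff}(\mathbb{R}^n)$. *)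

From mathcomp Require Import all_boot all_order all_algebra.
From mathcomp Require Import all_classical all_reals all_analysis.
Set Implicit Arguments. Unset Strict Implicit. Unset Printing Implicit Defensive.
Import Order.TTheory GRing.Theory Num.Theory.
Import numFieldTopology.Exports numFieldNormedType.Exports.
Local Open Scope classical_set_scope.
Local Open Scope ring_scope.

Section Affine.
Variables (R : realType) (n : nat).

Definition aff := ('cV[R]_n * 'M[R]_n)%type.

Definition is_aff (g : aff) : Prop := g.2 \in unitmx.

Definition aff_mul (g h : aff) : aff := (g.1 + g.2 *m h.1, g.2 *m h.2).
Definition aff_one : aff := (0, 1%:M).
Definition aff_inv (g : aff) : aff := (- (invmx g.2 *m g.1), invmx g.2).

Definition xi (g : aff) (x : aff) : aff := aff_mul (aff_mul g x) (aff_inv g).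

Definition euclid : set aff := [set g | g.2^T *m g.2 = 1%:M].

Definition aff_subgroup (G : set aff) : Prop :=
  (forall g, G g -> is_aff g) /\ G aff_one /\
  (forall g h, G g -> G h -> G (aff_mul g h)) /\
  (forall g, G g -> G (aff_inv g)).

Definition discrete_subset (G : set aff) : Prop :=
  forall g, G g -> exists U : set aff, nbhs g U /\ U `&` G = [set g].

(* G is cocompact in the Euclidean group E: G \ E is compact, i.e. there is
   a compact K in E with E = G K *)
Definition cocompact_in_euclid (G : set aff) : Prop :=
  exists K : set aff, compact K /\ K `<=` euclid /\
    forall x, euclid x -> exists g k, G g /\ K k /\ x = aff_mul g k.

(* n-dimensional crystallographic group, realised inside Aff(R^n): the
   conjugate, by some affine map, of a discrete cocompact subgroup of
   R^n x| O(n). *)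
Definition crystallographic (Gamma : set aff) : Prop :=
  aff_subgroup Gamma /\
  exists alpha : aff, is_aff alpha /\
    let G' := xi alpha @` Gamma in
    aff_subgroup G' /\ G' `<=` euclid /\ discrete_subset G' /\
    cocompact_in_euclid G'.

Definition translations_are_Zn (Gamma : set aff) : Prop :=
  forall d : 'cV[R]_n, Gamma (d, 1%:M) <->
    exists z : 'cV[int]_n, d = map_mx (fun x : int => x%:~R) z.

Definition is_aut (Gamma : set aff) (phi : aff -> aff) : Prop :=
  (forall g, Gamma g -> Gamma (phi g)) /\
  (forall g h, Gamma g -> Gamma h -> phi (aff_mul g h) = aff_mul (phi g) (phi h)) /\
  (forall g h, Gamma g -> Gamma h -> phi g = phi h -> g = h) /\
  (forall h, Gamma h -> exists g, Gamma g /\ phi g = h).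

End Affine.

From mathcomp Require Import all_boot all_order all_algebra.
From mathcomp Require Import all_classical all_reals all_analysis.
From mathcomp Require Import zify.
Import Order.TTheory GRing.Theory Num.Theory.
Local Open Scope classical_set_scope.
Local Open Scope ring_scope.

(* An automorphism phi of Gamma maps no non-translation to a translation: the
   elements s with phi s a translation commute and are normalised by Z^n, which
   forces (B - 1)^2 = 0 for the linear part B of s; as the powers 1 + k (B - 1)
   of B stay bounded in a crystallographic group, B = 1.  Hence automorphisms
   phi and psi agreeing on Z^n have the same linear parts, and
   psi g = (delta g, 1) phi g for an integral 1-cocycle delta of the point
   group P, which is finite because its matrices are integral and, being
   conjugate to orthogonal ones, bounded.  Averaging delta over P exhibits it
   as the coboundary of d = |P|^-1 sum delta, i.e. psi = xi_(d,1) o phi.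
   Writing d = q + d0 with q integral and d0 in {0, 1/|P|, ..., 1 - 1/|P|}^n
   gives psi = xi_(q,1) o xi_(d0,1) o phi with xi_(q,1) inner. *)

Section AffineAlgebra.
Variables (R : realType) (n : nat).
Implicit Types (g h k : aff R n) (d e z : 'cV[R]_n).

Lemma aff_mulA g h k : aff_mul (aff_mul g h) k = aff_mul g (aff_mul h k).
Proof. by rewrite /aff_mul /= mulmxDr !mulmxA addrA. Qed.

Lemma aff_mul1g g : aff_mul (aff_one R n) g = g.
Proof. by case: g => a A; rewrite /aff_mul /= !mul1mx add0r. Qed.

Lemma aff_mulg1 g : aff_mul g (aff_one R n) = g.
Proof. by case: g => a A; rewrite /aff_mul /= mulmx0 addr0 mulmx1. Qed.

Lemma aff_mulgV g : g.2 \in unitmx -> aff_mul g (aff_inv g) = aff_one R n.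
Proof.
by case: g => a A /= uA; rewrite /aff_mul /= mulmxN mulmxA mulmxV // mul1mx subrr.
Qed.

Lemma aff_mul_translg z g : aff_mul (z, 1%:M) g = (z + g.1, g.2).
Proof. by rewrite /aff_mul /= !mul1mx. Qed.

Lemma aff_mulg_transl g z : aff_mul g (z, 1%:M) = (g.1 + g.2 *m z, g.2).
Proof. by rewrite /aff_mul /= !mulmx1. Qed.

Lemma aff_mul_transl d e : aff_mul (d, 1%:M) (e, 1%:M) = (d + e, 1%:M).
Proof. by rewrite aff_mul_translg. Qed.

Lemma xi_transl d g : xi (d, 1%:M) g = (d + g.1 - g.2 *m d, g.2).
Proof.
by case: g => a A; rewrite /xi /aff_mul /aff_inv /= invmx1 !mul1mx mulmx1 mulmxN.
Qed.

Lemma xi_translE d g : xi (d, 1%:M) g = aff_mul (d - g.2 *m d, 1%:M) g.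
Proof. by rewrite xi_transl aff_mul_translg addrAC. Qed.

Lemma xi_transl_mul d g h :
  xi (d, 1%:M) (aff_mul g h) = aff_mul (xi (d, 1%:M) g) (xi (d, 1%:M) h).
Proof.
rewrite !xi_transl /aff_mul /=; congr pair.
by rewrite !mulmxDr !mulmxN mulmxA !addrA subrK.
Qed.

Lemma xi_translD d e g : xi (d, 1%:M) (xi (e, 1%:M) g) = xi (d + e, 1%:M) g.
Proof.
by rewrite !xi_transl /=; congr pair; rewrite mulmxDr opprD !addrA [in RHS]addrAC.
Qed.

Lemma xi_transl0 g : xi (0, 1%:M) g = g.
Proof. by rewrite xi_transl mulmx0 subr0 add0r; case: g. Qed.

End AffineAlgebra.

Section IntegralMatrices.
Context {R : archiNumDomainType} {m n : nat}.
Implicit Types (u v : 'M[R]_(m, n)).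

Lemma intmxN u : u \is a mxOver Num.int -> - u \is a mxOver Num.int.
Proof. by move=> /mxOverP u_int; apply/mxOverP => i j; rewrite mxE rpredN. Qed.

Lemma intmxB u v :
  u \is a mxOver Num.int -> v \is a mxOver Num.int -> u - v \is a mxOver Num.int.
Proof.
by move=> /mxOverP u_int /mxOverP v_int; apply/mxOverP => i j; rewrite !mxE rpredB.
Qed.

Lemma intmx_sum (I : Type) (r : seq I) (P : pred I) (F : I -> 'M[R]_(m, n)) :
  (forall i, P i -> F i \is a mxOver Num.int) ->
  \sum_(i <- r | P i) F i \is a mxOver Num.int.
Proof.
move=> F_int; apply/mxOverP => i j; rewrite summxE rpred_sum // => k Pk.
exact/mxOverP/F_int.
Qed.

Lemma intmx_delta i j : (delta_mx i j : 'M[R]_(m, n)) \is a mxOver Num.int.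
Proof. by apply/mxOverP => k l; rewrite mxE natr_int. Qed.

End IntegralMatrices.

Lemma mx_eq_on_int (R : archiNumDomainType) (n : nat) (A B : 'M[R]_n) :
  (forall z : 'cV[R]_n, z \is a mxOver Num.int -> A *m z = B *m z) -> A = B.
Proof.
move=> eqAB; apply/matrixP => i j.
have /(congr1 (fun v : 'cV_n => v i 0)) := eqAB _ (intmx_delta j 0).
by rewrite -!colE !mxE.
Qed.

Lemma int_bounded_repr (R : archiNumDomainType) (K : nat) (a : R) :
  a \is a Num.int -> `|a| <= K%:R -> exists k : 'I_(K.*2.+1), a = k%:R - K%:R.
Proof.
move=> a_int a_le; set m := Num.floor a.
have aE : a = m%:~R by rewrite floorK.
have m_le : `|m| <= K%:Z by rewrite -(ler_int R) intr_norm -aE.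
have m_lt : (absz (m + K%:Z)%R < K.*2.+1)%N by lia.
exists (Ordinal m_lt) => /=.
by rewrite natr_absz ger0_norm ?intrD -?aE ?addrK //; lia.
Qed.

Lemma ler_sum_term {R : numDomainType} {I : finType} (F : I -> R) (i : I) :
  (forall j, 0 <= F j) -> F i <= \sum_j F j.
Proof. by move=> F_ge0; rewrite (bigD1 i) //= lerDl sumr_ge0. Qed.

Lemma orthomx_entry_le1 (R : realFieldType) (n : nat) (Q : 'M[R]_n) i j :
  Q^T *m Q = 1%:M -> `|Q i j| <= 1.
Proof.
move=> /(congr1 (fun M : 'M[R]_n => M j j)); rewrite !mxE eqxx /= => col_norm1.
rewrite -(expr_le1 (_ : (0 < 2)%N)) // real_normK ?num_real //.
apply: le_trans (_ : _ <= \sum_k Q^T j k * Q k j) _; last by rewrite col_norm1.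
have := ler_sum_term (fun k => Q^T j k * Q k j) i; rewrite /= mxE -expr2; apply=> k.
by rewrite mxE -expr2 sqr_ge0.
Qed.

Lemma mulmx3_entry_bound (R : numDomainType) (n : nat) (C Q B : 'M[R]_n) i j :
  (forall k l, `|Q k l| <= 1) ->
  `|(C *m Q *m B) i j| <=
    (\sum_i' \sum_k `|C i' k|) * (\sum_l \sum_j' `|B l j'|).
Proof.
move=> Q_le1; apply: (le_trans (y := (\sum_k `|C i k|) * \sum_l `|B l j|)).
  rewrite mxE mulr_sumr; apply: (le_trans (ler_norm_sum _ _ _)).
  apply: ler_sum => l _; rewrite normrM; apply: ler_wpM2r => //; rewrite mxE.
  apply: (le_trans (ler_norm_sum _ _ _)); apply: ler_sum => k _.
  by rewrite normrM ler_piMr.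
apply: ler_pM; rewrite ?sumr_ge0 //.
- by apply: (ler_sum_term (fun i' => \sum_k `|C i' k|)) => i'; apply: sumr_ge0.
- rewrite [X in _ <= X]exchange_big /=.
  by apply: (ler_sum_term (fun j' => \sum_l `|B l j'|)) => j'; apply: sumr_ge0.
Qed.

Lemma unipotent_bounded_powers_eq1 {R : archiNumFieldType} {n : nat}
    (B : 'M[R]_n) (K : R) :
  (B - 1%:M) *m (B - 1%:M) = 0 -> (forall k i j, `|(B ^+ k) i j| <= K) -> B = 1%:M.
Proof.
set N := B - 1%:M => N2 B_bounded.
have BN : B *m N = N by rewrite -[B in B *m _](subrK 1%:M) mulmxDl N2 add0r mul1mx.
have powE k : B ^+ k = 1%:M + k%:R *: N.
  elim: k => [|k IH]; first by rewrite expr0 scale0r addr0.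
  rewrite exprS IH -mulmxE mulmxDr mulmx1 -scalemxAr BN mulrS scalerDl scale1r.
  by rewrite addrA /N [1%:M + _]addrC subrK.
suff N0 : N = 0 by apply/eqP; rewrite -subr_eq0 -/N N0.
apply/matrixP => i j; rewrite [RHS]mxE; apply/eqP/negPn/negP => Nij_neq0.
have Nij_gt0 : 0 < `|N i j| by rewrite normr_gt0.
set k := Num.Def.archi_bound ((K + 1) / `|N i j|).
have lt_K1 : K + 1 < `|k%:R * N i j|.
  rewrite normrM normr_nat -ltr_pdivrMr //; apply: archi_boundP.
  by rewrite divr_ge0 // addr_ge0 ?ler01 // (le_trans _ (B_bounded 0%N i i)).
have le_K1 : `|k%:R * N i j| <= K + 1.
  have := B_bounded k i j; rewrite powE !mxE => le_K.
  rewrite -[X in `|X|](addKr (i == j)%:R).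
  apply: le_trans; first exact: ler_normD.
  by rewrite normrN [leLHS]addrC lerD // normr_nat lern1 leq_b1.
by have := lt_le_trans lt_K1 le_K1; rewrite ltxx.
Qed.

Section Coboundary.
Context {R : numFieldType} {n : nat}.
Variables (F : seq 'M[R]_n) (c : 'M[R]_n -> 'cV[R]_n).

Definition cocycle_mean := (size F)%:R^-1 *: \sum_(B <- F) c B.

Lemma cocycle_coboundary :
  (0 < size F)%N -> (forall A, A \in F -> perm_eq F (map (mulmx A) F)) ->
  {in F &, forall A B, c (A *m B) = c A + A *m c B} ->
  {in F, forall A, c A = cocycle_mean - A *m cocycle_mean}.
Proof.
move=> F_gt0 F_perm c_cocycle A FA.
have sumE : A *m \sum_(B <- F) c B = \sum_(B <- F) c B - c A *+ size F.
  rewrite mulmx_sumr (eq_big_seq (fun B => c (A *m B) - c A)) => [|B FB]; last first.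
    by rewrite c_cocycle // addrC addKr.
  rewrite sumrB -(big_map (mulmx A) xpredT) -(perm_big _ (F_perm A FA)).
  by rewrite big_const_seq count_predT iter_addr_0.
have F_neq0 : (size F)%:R != 0 :> R by rewrite pnatr_eq0 -lt0n.
rewrite /cocycle_mean -scalemxAr sumE scalerBr -scaler_nat scalerA mulVf // scale1r.
by rewrite opprB addrC subrK.
Qed.

End Coboundary.

Section Grid.
Context {R : archiNumFieldType} {n : nat}.

Definition grid (N : nat) : seq 'cV[R]_n :=
  [seq \col_i ((f i : nat)%:R / N%:R)
  | f : {ffun 'I_n -> 'I_N} <- enum {ffun 'I_n -> 'I_N}].

Lemma grid_decomposition {N : nat} {d : 'cV[R]_n} :
  (0 < N)%N -> N%:R *: d \is a mxOver Num.int ->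
  exists2 q, q \is a mxOver Num.int & d - q \in grid N.
Proof.
move=> N_gt0 /mxOverP Nd_int; pose s i := Num.floor (N%:R * d i 0).
have sE i : (s i)%:~R = N%:R * d i 0.
  by rewrite floorK //; have := Nd_int i 0; rewrite mxE.
have r_lt i : (absz (s i %% N%:Z)%Z < N)%N by lia.
exists (\col_i ((s i %/ N%:Z)%Z)%:~R).
  by apply/mxOverP => i j; rewrite mxE intr_int.
apply/mapP; exists [ffun i => Ordinal (r_lt i)]; first by rewrite mem_enum.
apply/matrixP => i j; rewrite (ord1 j) !mxE ffunE /=.
have N_neq0 : N%:R != 0 :> R by rewrite pnatr_eq0 -lt0n.
apply: (canRL (mulfK N_neq0)).
rewrite mulrBl mulrC -sE natr_absz ger0_norm ?modz_ge0 -?lt0n //.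
by rewrite {1}(divz_eq (s i) N%:Z) intrD intrM pmulrn addrAC subrr add0r.
Qed.

End Grid.

Lemma crystallographic_lin_bounded {R : realType} {n : nat} {Gamma : set (aff R n)} :
  crystallographic Gamma ->
  exists K : nat, forall g, Gamma g -> forall i j, `|g.2 i j| <= K%:R.
Proof.
case=> _ [[a B] [/= B_unit [_ [conj_euclid _]]]].
set K := (\sum_i \sum_k `|invmx B i k|) * (\sum_l \sum_j `|B l j|).
exists (Num.Def.archi_bound K) => g Gg i j.
have K_ge0 : 0 <= K by rewrite mulr_ge0 // sumr_ge0 // => *; rewrite sumr_ge0.
apply/ltW/(le_lt_trans _ (archi_boundP K_ge0)).
have /= Q_orth : euclid (xi (a, B) g) by apply: conj_euclid; exists g.
have -> : g.2 = invmx B *m (B *m g.2 *m invmx B) *m B.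
  by rewrite !mulmxA mulVmx // mul1mx -mulmxA mulVmx // mulmx1.
by apply: mulmx3_entry_bound => k l; apply: orthomx_entry_le1.
Qed.

Section Subgroup.
Context {R : realType} {n : nat} {Gamma : set (aff R n)}.
Hypothesis GammaS : aff_subgroup Gamma.
Hypothesis GammaT : translations_are_Zn Gamma.
Implicit Types (g h : aff R n) (d e y z : 'cV[R]_n).

Lemma mem_transl d : Gamma (d, 1%:M) <-> d \is a mxOver Num.int.
Proof.
rewrite GammaT; split=> [[w ->]|/mxOverP d_int].
  by apply/mxOverP => i j; rewrite mxE intr_int.
by exists (map_mx (@Num.floor R) d); apply/matrixP => i j; rewrite !mxE floorK.
Qed.

Lemma lin_unitmx g : Gamma g -> g.2 \in unitmx.
Proof. by case: GammaS => + _; apply. Qed.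

Lemma mem_aff_one : Gamma (aff_one R n).
Proof. by case: GammaS => _ []. Qed.

Lemma mem_aff_mul g h : Gamma g -> Gamma h -> Gamma (aff_mul g h).
Proof. by case: GammaS => _ [_ [+ _]]; apply. Qed.

Lemma mem_aff_inv g : Gamma g -> Gamma (aff_inv g).
Proof. by case: GammaS => _ [_ [_ +]]; apply. Qed.

Lemma lin_mulmx_int g z :
  Gamma g -> z \is a mxOver Num.int -> g.2 *m z \is a mxOver Num.int.
Proof.
move=> Gg /mem_transl Gz; apply/mem_transl.
have -> : (g.2 *m z, 1%:M) = aff_mul (aff_mul g (z, 1%:M)) (aff_inv g).
  rewrite aff_mulg_transl /aff_mul /aff_inv /= mulmxV ?lin_unitmx //.
  by rewrite mulmxN mulmxA mulmxV ?lin_unitmx // mul1mx addrAC subrr add0r.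
by apply: mem_aff_mul; [apply: mem_aff_mul | apply: mem_aff_inv].
Qed.

Lemma lin_int g : Gamma g -> g.2 \is a mxOver Num.int.
Proof.
move=> Gg; apply/mxOverP => i j.
by have /mxOverP/(_ i 0) := lin_mulmx_int _ _ Gg (intmx_delta j 0); rewrite -colE mxE.
Qed.

Lemma aut_xi_transl e :
  (forall g, Gamma g -> e - g.2 *m e \is a mxOver Num.int) ->
  is_aut Gamma (xi (e, 1%:M)).
Proof.
have xi_mem e' : (forall g, Gamma g -> e' - g.2 *m e' \is a mxOver Num.int) ->
    forall g, Gamma g -> Gamma (xi (e', 1%:M) g).
  move=> e'_int g Gg; rewrite xi_translE.
  by apply: mem_aff_mul => //; apply/mem_transl/e'_int.
move=> e_int; split; first exact: xi_mem.
split; first by move=> g h _ _; apply: xi_transl_mul.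
split.
  move=> [a A] [b B] _ _; rewrite !xi_transl /= => -[+ eqAB].
  by rewrite eqAB => /addIr/addrI ->.
move=> h Gh; exists (xi (- e, 1%:M) h).
split; last by rewrite xi_translD subrr xi_transl0.
apply: xi_mem Gh => g Gg.
by rewrite mulmxN opprK addrC -opprB; apply/intmxN/e_int.
Qed.

Context {K : nat} (lin_bounded : forall g, Gamma g -> forall i j, `|g.2 i j| <= K%:R).

Lemma lin_eq1_of_commuting_normal (S : set (aff R n)) :
  S `<=` Gamma ->
  (forall s t, S s -> S t -> aff_mul s t = aff_mul t s) ->
  (forall s z, S s -> z \is a mxOver Num.int ->
     S (aff_mul (aff_mul (z, 1%:M) s) (- z, 1%:M))) ->
  forall s, S s -> s.2 = 1%:M.
Proof.
move=> SGamma S_comm S_conj s Ss; set B := s.2; set N := B - 1%:M.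
have N2z z : z \is a mxOver Num.int -> N *m (N *m z) = 0.
  move=> z_int; set t := aff_mul (aff_mul (z, 1%:M) s) (- z, 1%:M).
  have t1 : t.1 - s.1 = - (N *m z).
    rewrite /t aff_mul_translg aff_mulg_transl /= mulmxN mulmxBl mul1mx.
    by rewrite opprB addrAC addrK.
  have t2 : t.2 = B by rewrite /t /aff_mul /= mulmx1 mul1mx.
  have St : S t := S_conj _ _ Ss z_int; clearbody t.
  have /eqP : N *m (t.1 - s.1) = 0.
    have := S_comm _ _ Ss St; rewrite /aff_mul t2; case=> comm.
    apply/eqP; rewrite mulmxBr subr_eq0 /N !mulmxBl !mul1mx; apply/eqP.
    apply: (addIr (t.1 + s.1)); rewrite {2}[t.1 + s.1]addrC !addrA !subrK.
    by rewrite addrC comm addrC.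
  by rewrite t1 mulmxN oppr_eq0 => /eqP.
apply: (unipotent_bounded_powers_eq1 _ K%:R).
  by apply: mx_eq_on_int => z /N2z; rewrite mul0mx mulmxA.
have pow_mem k : Gamma (iter k (aff_mul s) (aff_one R n)).
  elim: k => [|k IH] /=; first exact: mem_aff_one.
  by apply: mem_aff_mul => //; apply: SGamma.
have pow_lin k : (iter k (aff_mul s) (aff_one R n)).2 = B ^+ k.
  by elim: k => [|k IH] //=; rewrite exprS IH.
by move=> k i j; rewrite -pow_lin; apply: lin_bounded.
Qed.

Definition point_group : set 'M[R]_n := [set g.2 | g in Gamma].

Definition bounded_intmx (f : {ffun 'I_n * 'I_n -> 'I_(K.*2.+1)}) : 'M[R]_n :=
  \matrix_(i, j) ((f (i, j) : nat)%:R - K%:R).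

Definition point_group_seq : seq 'M[R]_n :=
  undup [seq A <- map bounded_intmx (enum {ffun 'I_n * 'I_n -> 'I_(K.*2.+1)})
           | `[< point_group A >]].

Lemma mem_point_group_seq A : A \in point_group_seq <-> point_group A.
Proof.
rewrite mem_undup mem_filter; split=> [/andP[/asboolP //]|PA].
rewrite (asboolT PA) /=; case: PA => g Gg <-.
have [f fE] : exists f : {ffun 'I_n * 'I_n -> 'I_(K.*2.+1)}, g.2 = bounded_intmx f.
  have /fin_all_exists[f fE] ij : exists k : 'I_(K.*2.+1), g.2 ij.1 ij.2 = k%:R - K%:R.
    by apply: int_bounded_repr; [apply/mxOverP/lin_int | apply: lin_bounded].
  by exists (finfun f); apply/matrixP => i j; rewrite mxE ffunE -(fE (i, j)).
by rewrite fE map_f ?mem_enum.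
Qed.

Lemma point_group_seq_perm A :
  point_group A -> perm_eq point_group_seq (map (mulmx A) point_group_seq).
Proof.
case=> g Gg <-; have g_unit := lin_unitmx _ Gg.
apply: uniq_perm; rewrite ?undup_uniq ?map_inj_uniq ?undup_uniq //.
  exact: can_inj (mulKmx g_unit).
move=> B; apply/idP/idP.
  move=> /mem_point_group_seq[h Gh <-].
  rewrite -[h.2](mulKVmx g_unit) map_f //; apply/mem_point_group_seq.
  by exists (aff_mul (aff_inv g) h); [apply/mem_aff_mul/Gh/mem_aff_inv |].
move=> /mapP[C /mem_point_group_seq[h Gh <-] ->].
by apply/mem_point_group_seq; exists (aff_mul g h); [apply: mem_aff_mul |].
Qed.

Lemma point_group_seq_gt0 : (0 < size point_group_seq)%N.
Proof.
have : 1%:M \in point_group_seq.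
  by apply/mem_point_group_seq; exists (aff_one R n); first exact: mem_aff_one.
by case: point_group_seq.
Qed.

Section Automorphism.
Context {phi : aff R n -> aff R n} (phi_aut : is_aut Gamma phi).

Lemma aut_mem g : Gamma g -> Gamma (phi g).
Proof. by case: phi_aut => + _; apply. Qed.

Lemma aut_mul g h : Gamma g -> Gamma h -> phi (aff_mul g h) = aff_mul (phi g) (phi h).
Proof. by case: phi_aut => _ [+ _]; apply. Qed.

Lemma aut_lin_unitmx g : Gamma g -> (phi g).2 \in unitmx.
Proof. by move=> Gg; apply/lin_unitmx/aut_mem. Qed.

Lemma aut_lin_eq1 g : Gamma g -> (phi g).2 = 1%:M -> g.2 = 1%:M.
Proof.
case: phi_aut => _ [_ [phi_inj _]] Gg phi_g1.
apply: (@lin_eq1_of_commuting_normal [set g | Gamma g /\ (phi g).2 = 1%:M]); last by [].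
- by move=> s [].
- move=> s t [Gs phi_s1] [Gt phi_t1]; apply: phi_inj; try exact: mem_aff_mul.
  rewrite !aut_mul //.
  move: phi_s1 phi_t1; case: (phi s) => [a A]; case: (phi t) => [b B] /= -> ->.
  by rewrite /aff_mul /= !mul1mx addrC.
move=> s z [Gs phi_s1] z_int.
have Gz : Gamma (z, 1%:M) by apply/mem_transl.
set t := aff_mul (aff_mul (z, 1%:M) s) (- z, 1%:M).
have Gt : Gamma t by do 2?apply: mem_aff_mul => //; apply/mem_transl/intmxN.
have conj_z : aff_mul (z, 1%:M) s = aff_mul t (z, 1%:M).
  by rewrite /t aff_mulA aff_mul_transl addNr aff_mulg1.
clearbody t; split=> //.
have := congr1 (fun g => (phi g).2) conj_z.
rewrite /= !aut_mul //= phi_s1 mulmx1 => phi_z.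
by apply: (can_inj (mulmxK (aut_lin_unitmx _ Gz))); rewrite /= mul1mx -phi_z.
Qed.

Lemma aut_transl_surj y : y \is a mxOver Num.int ->
  exists2 t, Gamma t & t.2 = 1%:M /\ phi t = (y, 1%:M).
Proof.
move=> /mem_transl Gy; case: phi_aut => _ [_ [_ phi_surj]].
have [t [Gt phi_t]] := phi_surj _ Gy.
by exists t => //; split=> //; apply: aut_lin_eq1 => //; rewrite phi_t.
Qed.

Lemma aut_transl_conj g z y :
  Gamma g -> z \is a mxOver Num.int -> phi (z, 1%:M) = (y, 1%:M) ->
  phi (g.2 *m z, 1%:M) = ((phi g).2 *m y, 1%:M).
Proof.
move=> Gg z_int phi_z.
have Gz : Gamma (z, 1%:M) by apply/mem_transl.
have Gt : Gamma (g.2 *m z, 1%:M) by apply/mem_transl/lin_mulmx_int.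
have conj_z : aff_mul g (z, 1%:M) = aff_mul (g.2 *m z, 1%:M) g.
  by rewrite aff_mulg_transl aff_mul_translg addrC.
have := congr1 phi conj_z; rewrite !aut_mul // phi_z aff_mulg_transl.
case: (phi (g.2 *m z, 1%:M)) => w W; rewrite /aff_mul /= => -[eq1 eq2].
have W1 : W = 1%:M.
  by apply: (can_inj (mulmxK (aut_lin_unitmx _ Gg))); rewrite /= mul1mx -eq2.
by move: eq1; rewrite W1 mul1mx addrC => /addIr ->.
Qed.

End Automorphism.

Section AutomorphismPair.
Context {phi psi : aff R n -> aff R n}.
Hypotheses (phi_aut : is_aut Gamma phi) (psi_aut : is_aut Gamma psi).
Hypothesis phi_psi_transl : forall g, Gamma g -> g.2 = 1%:M -> phi g = psi g.

Lemma aut_pair_lin_eq g : Gamma g -> (psi g).2 = (phi g).2.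
Proof.
move=> Gg; apply: mx_eq_on_int => y y_int.
have [[z t2] Gt [/= t2_1 phi_t]] := aut_transl_surj phi_aut _ y_int.
rewrite {}t2_1 in Gt phi_t.
have z_int : z \is a mxOver Num.int by apply/mem_transl.
have psi_t : psi (z, 1%:M) = (y, 1%:M) by rewrite -phi_psi_transl.
have Gt' : Gamma (g.2 *m z, 1%:M) by apply/mem_transl/lin_mulmx_int.
have := phi_psi_transl _ Gt' erefl.
rewrite (aut_transl_conj phi_aut g z y) // (aut_transl_conj psi_aut g z y) //.
by case.
Qed.

Definition aut_diff g := (psi g).1 - (phi g).1.

Lemma aut_diffE g : Gamma g -> psi g = aff_mul (aut_diff g, 1%:M) (phi g).
Proof.
move=> Gg; rewrite aff_mul_translg subrK -aut_pair_lin_eq //; by case: (psi g).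
Qed.

Lemma aut_diff_int g : Gamma g -> aut_diff g \is a mxOver Num.int.
Proof.
move=> Gg; apply/mem_transl.
have -> : (aut_diff g, 1%:M) = aff_mul (psi g) (aff_inv (phi g)).
  by rewrite aut_diffE // aff_mulA aff_mulgV ?aff_mulg1 ?(aut_lin_unitmx phi_aut).
by apply: mem_aff_mul; [apply: (aut_mem psi_aut) | apply/mem_aff_inv/(aut_mem phi_aut)].
Qed.

Lemma aut_diff_mul g h : Gamma g -> Gamma h ->
  aut_diff (aff_mul g h) = aut_diff g + (phi g).2 *m aut_diff h.
Proof.
move=> Gg Gh; rewrite /aut_diff (aut_mul phi_aut) // (aut_mul psi_aut) //.
rewrite /aff_mul /= aut_pair_lin_eq // mulmxBr opprD !addrA; congr (_ - _).
by rewrite addrAC.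
Qed.

Lemma aut_diff_lin g h : Gamma g -> Gamma h -> (phi g).2 = (phi h).2 ->
  aut_diff g = aut_diff h.
Proof.
move=> Gg Gh phi_gh.
set k := aff_mul (aff_inv g) h.
have Gk : Gamma k by apply/mem_aff_mul/Gh/mem_aff_inv.
have hE : h = aff_mul g k by rewrite /k -aff_mulA aff_mulgV ?lin_unitmx // aff_mul1g.
have k1 : k.2 = 1%:M.
  apply: (aut_lin_eq1 phi_aut) => //.
  apply: (can_inj (mulKmx (aut_lin_unitmx phi_aut _ Gg))).
  by rewrite /= mulmx1 {2}phi_gh hE (aut_mul phi_aut).
by rewrite hE aut_diff_mul // /aut_diff (phi_psi_transl _ Gk k1) subrr mulmx0 addr0.
Qed.

(* Well defined on the point group by aut_diff_lin; the default of xget is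
   never used there. *)
Definition lin_cocycle (A : 'M[R]_n) : 'cV[R]_n :=
  aut_diff (xget (aff_one R n) [set g | Gamma g /\ (phi g).2 = A]).

Lemma lin_cocycleE g : Gamma g -> lin_cocycle (phi g).2 = aut_diff g.
Proof.
move=> Gg; rewrite /lin_cocycle.
have [Gh phi_h] :=
  @xgetI _ (aff_one R n) [set h | Gamma h /\ (phi h).2 = (phi g).2] g (conj Gg erefl).
exact: aut_diff_lin.
Qed.

Lemma point_group_aut A : A \in point_group_seq -> exists2 g, Gamma g & (phi g).2 = A.
Proof.
case/mem_point_group_seq => h Gh <-; case: phi_aut => _ [_ [_ /(_ h Gh) [g [Gg <-]]]].
by exists g.
Qed.

Lemma aut_pair_xi_transl : exists d : 'cV[R]_n,
  [/\ forall g, Gamma g -> psi g = xi (d, 1%:M) (phi g),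
      forall g, Gamma g -> d - g.2 *m d \is a mxOver Num.int &
      (size point_group_seq)%:R *: d \is a mxOver Num.int].
Proof.
have c_int A : A \in point_group_seq -> lin_cocycle A \is a mxOver Num.int.
  by case/point_group_aut => g Gg <-; rewrite lin_cocycleE ?aut_diff_int.
have c_coboundary := cocycle_coboundary point_group_seq lin_cocycle point_group_seq_gt0
  (fun A => point_group_seq_perm A \o (mem_point_group_seq A).1).
have c_lin g : Gamma g -> (phi g).2 \in point_group_seq.
  by move=> Gg; apply/mem_point_group_seq; exists (phi g) => //; apply: aut_mem.
set d := cocycle_mean point_group_seq lin_cocycle in c_coboundary *.
have d_cob g : Gamma g -> aut_diff g = d - (phi g).2 *m d.
  move=> Gg; rewrite -lin_cocycleE // c_coboundary ?c_lin //.
  move=> _ _ /point_group_aut[g1 G1 <-] /point_group_aut[g2 G2 <-].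
  have -> : (phi g1).2 *m (phi g2).2 = (phi (aff_mul g1 g2)).2.
    by rewrite (aut_mul phi_aut).
  by rewrite !lin_cocycleE ?aut_diff_mul //; apply: mem_aff_mul.
exists d; split.
- by move=> g Gg; rewrite xi_translE -d_cob ?aut_diffE.
- move=> g Gg; have /point_group_aut[h Gh phi_h] : g.2 \in point_group_seq.
    by apply/mem_point_group_seq; exists g.
  by rewrite -phi_h -d_cob ?aut_diff_int.
have N_neq0 : (size point_group_seq)%:R != 0 :> R.
  by rewrite pnatr_eq0 -lt0n point_group_seq_gt0.
rewrite /d /cocycle_mean scalerA mulfV // scale1r big_seq.
exact: intmx_sum c_int.
Qed.

End AutomorphismPair.

End Subgroup.

Theorem corollary5p4 (R : realType) (n : nat) (Gamma : set (aff R n)) :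
  crystallographic Gamma -> translations_are_Zn Gamma ->
  exists Delta_base : seq 'cV[R]_n,
    (forall d, d \in Delta_base -> is_aut Gamma (xi (d, 1%:M))) /\
    (forall phi psi : aff R n -> aff R n,
       is_aut Gamma phi -> is_aut Gamma psi ->
       (forall gamma, Gamma gamma -> gamma.2 = 1%:M -> phi gamma = psi gamma) ->
       exists d_base, d_base \in Delta_base /\
         exists iota_g, Gamma iota_g /\
           forall gamma, Gamma gamma ->
             psi gamma = xi iota_g (xi (d_base, 1%:M) (phi gamma))).
Proof.
move=> crystal GammaT; have GammaS : aff_subgroup Gamma by case: crystal.
have [K lin_bounded] := crystallographic_lin_bounded crystal.
have N_gt0 := point_group_seq_gt0 GammaS GammaT lin_bounded.
set N := size (point_group_seq (Gamma := Gamma) (K := K)).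
exists [seq d <- grid N | `[< is_aut Gamma (xi (d, 1%:M)) >]].
split=> [d|phi psi phi_aut psi_aut phi_psi].
  by rewrite mem_filter => /andP[/asboolP].
have [d [psiE d_cob d_frac]] :=
  aut_pair_xi_transl GammaS GammaT lin_bounded phi_aut psi_aut phi_psi.
have [q q_int d_q_grid] := grid_decomposition N_gt0 d_frac.
exists (d - q); split.
  rewrite mem_filter d_q_grid andbT.
  apply/asboolP/(aut_xi_transl GammaS GammaT) => g Gg.
  have -> : d - q - g.2 *m (d - q) = (d - g.2 *m d) - (q - g.2 *m q).
    by rewrite mulmxBr !opprB addrACA [in RHS]addrACA [- q + _]addrC.
  by rewrite intmxB ?d_cob ?intmxB ?(lin_mulmx_int GammaS GammaT).
exists (q, 1%:M); split; first exact/(mem_transl GammaT).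
by move=> g Gg; rewrite xi_translD addrC subrK psiE.
Qed.
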